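(* Let $V$ be a finite set with $|V|\ge 2$, let $A$ be a real symmetric matrix indexed by $V$, and let $(X,Y)$ be a separation of $A$. If $x\in X\setminus Y$ is a simplicial vertex of the principal submatrix $A[X]$, then $x$ is a simplicial vertex of $A$.
   Context: $\min A=\min\{A_{xy}:x\ne y\in V\}$. A separation of $A$ is a pair $(X,Y)$ of subsets of $V$ with $X\cup Y=V$, $X\setminus Y\neq\emptyset$, $Y\setminus X\ne\emptyset$, and $A_{xy}=\min A$ for all $x\in X\setminus Y$, $y\in Y\setminus X$. $A[X]$ denotes the principal submatrix of $A$ indexed by $X$. An element $v$ is simplicial in a symmetric matrix $B$ indexed by $U$ if $B_{yz}\ge\min\{B_{vy},B_{vz}\}$ for all distinct $y,z\in U\setminus\{v\}$. *)

From mathcomp Require Import all_boot all_order all_algebra.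
Set Implicit Arguments. Unset Strict Implicit. Unset Printing Implicit Defensive.
Import Order.TTheory GRing.Theory Num.Theory.
Local Open Scope ring_scope.

Definition symmetric_mx (R : realFieldType) (V : finType) (A : V -> V -> R) :=
  forall x y, A x y = A y x.

Definition offdiag (R : realFieldType) (V : finType) (A : V -> V -> R) : seq R :=
  [seq A p.1 p.2 | p <- enum [pred p : V * V | p.1 != p.2]].

(* min A = min { A_xy : x <> y } (meaningful when |V| >= 2; 0 otherwise). *)
Definition minA (R : realFieldType) (V : finType) (A : V -> V -> R) : R :=
  match offdiag A with
  | [::] => 0
  | a :: s => foldr Num.min a s
  end.

Definition separation (R : realFieldType) (V : finType) (A : V -> V -> R)
  (X Y : {set V}) : Prop :=
  [/\ X :|: Y = setT, X :\: Y != set0, Y :\: X != set0 &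
      forall x y, x \in X :\: Y -> y \in Y :\: X -> A x y = minA A].

Definition simplicial_in (R : realFieldType) (V : finType) (A : V -> V -> R)
  (U : {set V}) (v : V) : Prop :=
  forall y z, y \in U :\ v -> z \in U :\ v -> y != z ->
    A y z >= Num.min (A v y) (A v z).

Definition simplicial (R : realFieldType) (V : finType) (A : V -> V -> R) (v : V) :=
  simplicial_in A setT v.

From Pilot Require Import Defs.
From mathcomp Require Import all_boot all_order all_algebra.
Import Order.TTheory GRing.Theory Num.Theory.
Local Open Scope ring_scope.

(* If y or z lies outside X, then A_xy or A_xz equals min A, which is at most
   A_yz, so the simplicial inequality at x holds trivially; if y and z both
   lie in X, it is the hypothesis on A[X]. *)

Lemma foldr_min_le_mem {disp : Order.disp_t} {T : orderType disp} (a b : T)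
    (s : seq T) :
  b \in a :: s -> (foldr Order.min a s <= b)%O.
Proof.
elim: s b => [|c s IHs] b /=; first by rewrite inE => /eqP ->.
rewrite ge_min !inE => /or3P [/eqP ->|/eqP ->|b_s].
- by rewrite IHs ?orbT // mem_head.
- by rewrite lexx.
- by rewrite IHs ?orbT // inE b_s orbT.
Qed.

(* Qualified as [Defs.minA]: plain [minA] is the associativity of [Order.min]. *)
Lemma minA_le {R : realFieldType} {V : finType} (A : V -> V -> R) (p q : V) :
  p != q -> Defs.minA A <= A p q.
Proof.
move=> neq_pq; have : A p q \in offdiag A.
  by apply/mapP; exists (p, q); rewrite ?mem_enum.
by rewrite /Defs.minA; case: (offdiag A) => [//|a s]; apply: foldr_min_le_mem.
Qed.

Lemma separation_minA {R : realFieldType} {V : finType} {A : V -> V -> R}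
    {X Y : {set V}} {x y : V} :
  separation A X Y -> x \in X :\: Y -> y \notin X -> A x y = Defs.minA A.
Proof.
case=> cover_XY _ _ sepXY xXY yNX; apply: sepXY => //.
have : y \in X :|: Y by rewrite cover_XY inE.
by rewrite !inE (negbTE yNX).
Qed.

Theorem lemma7 (R : realFieldType) (V : finType) (A : V -> V -> R)
  (X Y : {set V}) (x : V) :
  (2 <= #|V|)%N -> symmetric_mx A -> separation A X Y ->
  x \in X :\: Y -> simplicial_in A X x -> simplicial A x.
Proof.
move=> _ _ sepXY xXY simpX y z.
rewrite !inE !andbT => neq_yx neq_zx neq_yz.
have [yX|yNX] := boolP (y \in X); last first.
  by rewrite ge_min (separation_minA sepXY xXY yNX) minA_le.
have [zX|zNX] := boolP (z \in X); last first.
  by rewrite ge_min (separation_minA sepXY xXY zNX) minA_le ?orbT.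
by apply: simpX; rewrite ?inE ?neq_yx ?neq_zx.
Qed.
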